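(* Let $(a_n)_{n\ge1}$ be a non-negative sequence and define $b_n = \sum_{l=1}^n 2^{l-n}a_l$. If $\sum_{n=1}^\infty a_n < +\infty$, then $\liminf_{n\to\infty} n b_n = 0$. *)

From Stdlib Require Import Reals.
From Coquelicot Require Import Coquelicot.
Open Scope R_scope.

(* b_n = sum_{l=1}^n 2^(l-n) a_l, for n >= 1 (b_0 = 0, unused). *)
Definition bseq (a : nat -> R) (n : nat) : R :=
  sum_n_m (fun l => Rpower 2 (INR l - INR n) * a l) 1 n.

(* The recursion b_(n+1) = b_n / 2 + a_(n+1) gives the identity
   b_1 + ... + b_N + b_N = 2 (a_1 + ... + a_N), so the nonnegative sequence
   (b_n) has bounded partial sums.  If n b_n >= eps held for all large n, the
   partial sums of b would dominate eps times those of the harmonic series;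
   by condensation each block of indices ]M, 2M + 1] adds at least eps / 2,
   so they would be unbounded. *)

From Stdlib Require Import Reals Lra Lia Classical.
From Coquelicot Require Import Coquelicot.
Open Scope R_scope.

Lemma bseq_0 (a : nat -> R) : bseq a 0 = 0.
Proof. unfold bseq. rewrite sum_n_m_zero; [reflexivity | lia]. Qed.

Lemma bseq_S (a : nat -> R) (n : nat) : bseq a (S n) = bseq a n / 2 + a (S n).
Proof.
  unfold bseq. rewrite sum_n_Sm by lia.
  change (plus ?x ?y) with (x + y).
  replace (INR (S n) - INR (S n)) with 0 by ring.
  rewrite Rpower_O by lra.
  f_equal; [|ring].
  rewrite (sum_n_m_ext _ (fun l => mult (Rpower 2 (INR l - INR n) * a l) (/ 2))).
  - rewrite sum_n_m_mult_r. reflexivity.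
  - intros l. change (mult ?x ?y) with (x * y).
    replace (INR l - INR (S n)) with ((INR l - INR n) + - (1)) by (rewrite S_INR; ring).
    rewrite Rpower_plus, Rpower_Ropp, Rpower_1 by lra.
    rewrite Rmult_assoc, (Rmult_comm (/ 2)), <- Rmult_assoc. reflexivity.
Qed.

Lemma bseq_nonneg (a : nat -> R) (ha : forall n, (1 <= n)%nat -> 0 <= a n) (n : nat) :
  0 <= bseq a n.
Proof.
  induction n as [|n IH].
  - rewrite bseq_0. lra.
  - rewrite bseq_S. pose proof (ha (S n) ltac:(lia)). lra.
Qed.

Lemma sum_n_bseq (a : nat -> R) (n : nat) :
  sum_n (fun k => bseq a (S k)) n + bseq a (S n) = 2 * sum_n (fun k => a (S k)) n.
Proof.
  induction n as [|n IH].
  - rewrite !sum_O, bseq_S, bseq_0. lra.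
  - rewrite !sum_Sn. change (plus ?x ?y) with (x + y).
    rewrite (bseq_S a (S n)). lra.
Qed.

Lemma sum_n_le_Series (u : nat -> R) (hu : forall n, 0 <= u n) (hex : ex_series u)
  (n : nat) : sum_n u n <= Series u.
Proof.
  apply (is_lim_seq_incr_compare (sum_n u)).
  - exact (Series_correct u hex).
  - intros m. rewrite sum_Sn. change (plus ?x ?y) with (x + y).
    pose proof (hu (S m)). lra.
Qed.

Lemma sum_n_m_le_loc (u v : nat -> R) (n m : nat) :
  (forall k, (n <= k <= m)%nat -> u k <= v k) -> sum_n_m u n m <= sum_n_m v n m.
Proof.
  intros Huv.
  rewrite (sum_n_m_ext_loc v (fun k => if ((n <=? k) && (k <=? m))%bool then v k else u k)).
  - apply sum_n_m_le. intros k.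
    destruct (n <=? k) eqn:Hn, (k <=? m) eqn:Hm; simpl; try lra.
    apply Huv. apply Nat.leb_le in Hn, Hm. lia.
  - intros k [Hn Hm]. apply Nat.leb_le in Hn, Hm.
    now rewrite Hn, Hm.
Qed.

Fixpoint condensation_index (N k : nat) : nat :=
  match k with
  | 0 => N
  | S k => S (2 * condensation_index N k)
  end.

Lemma condensation_index_ge (N k : nat) : (N <= condensation_index N k)%nat.
Proof. induction k; simpl; lia. Qed.

Section Harmonic_minorant.

Variables (u : nat -> R) (eps : R) (N : nat).
Hypothesis hu : forall k, 0 <= u k.
Hypothesis hlow : forall k, (N <= k)%nat -> eps <= INR (S k) * u k.

Lemma sum_n_doubling (M : nat) :
  (N <= S M)%nat -> sum_n u M + eps / 2 <= sum_n u (S (2 * M)).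
Proof.
  intros HM.
  unfold sum_n. rewrite (sum_n_m_Chasles u 0 M (S (2 * M))) by lia.
  change (plus ?x ?y) with (x + y).
  assert (HSM : 0 < INR (S M)) by apply lt_0_INR, Nat.lt_0_succ.
  assert (Hblock : sum_n_m (fun _ => eps / (2 * INR (S M))) (S M) (S (2 * M))
                   <= sum_n_m u (S M) (S (2 * M))).
  { apply sum_n_m_le_loc. intros k Hk.
    assert (Hk2 : INR (S k) <= 2 * INR (S M)).
    { replace 2 with (INR 2) by reflexivity. rewrite <- mult_INR.
      apply le_INR. lia. }
    pose proof (hlow k ltac:(lia)).
    pose proof (Rmult_le_compat_l (u k) _ _ (hu k) Hk2).
    apply Rle_div_l; lra. }
  rewrite sum_n_m_const in Hblock.
  replace (S (S (2 * M)) - S M)%nat with (S M) in Hblock by lia.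
  replace (INR (S M) * (eps / (2 * INR (S M)))) with (eps / 2) in Hblock by (field; lra).
  lra.
Qed.

Lemma sum_n_condensation_index (k : nat) :
  INR k * (eps / 2) <= sum_n u (condensation_index N k).
Proof.
  induction k as [|k IH].
  - simpl INR. rewrite Rmult_0_l.
    replace 0 with (sum_n (fun _ => 0) N) by (unfold sum_n; now rewrite sum_n_m_const, Rmult_0_r).
    apply sum_n_m_le, hu.
  - rewrite S_INR.
    pose proof (condensation_index_ge N k).
    pose proof (sum_n_doubling (condensation_index N k) ltac:(lia)).
    cbn [condensation_index]. lra.
Qed.

End Harmonic_minorant.

Lemma LimInf_seq_INR_S_mult_eq_0 (u : nat -> R) (C : R) (hu : forall k, 0 <= u k)
  (hC : forall n, sum_n u n <= C) :
  LimInf_seq (fun k => INR (S k) * u k) = Finite 0.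
Proof.
  apply is_LimInf_seq_unique. intros eps. pose proof (cond_pos eps). split.
  - intros N. apply NNPP. intros Hnone.
    assert (hlow : forall k, (N <= k)%nat -> eps <= INR (S k) * u k).
    { intros k Hk. apply Rnot_lt_le. intros Hlt. apply Hnone. exists k. split; [exact Hk | lra]. }
    destruct (INR_archimed (eps / 2) C) as [k Hk]; [lra|].
    pose proof (sum_n_condensation_index u eps N hu hlow k).
    pose proof (hC (condensation_index N k)).
    lra.
  - exists 0%nat. intros n _.
    pose proof (Rmult_le_pos _ _ (pos_INR (S n)) (hu n)). lra.
Qed.

Theorem lemma7 (a : nat -> R) (ha : forall n, (1 <= n)%nat -> 0 <= a n)
  (hsum : ex_series (fun k => a (S k))) :
  LimInf_seq (fun k => INR (S k) * bseq a (S k)) = Finite 0.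
Proof.
  apply (LimInf_seq_INR_S_mult_eq_0 _ (2 * Series (fun k => a (S k)))).
  - intros k. now apply bseq_nonneg.
  - intros n.
    pose proof (sum_n_bseq a n).
    pose proof (bseq_nonneg a ha (S n)).
    pose proof (sum_n_le_Series _ (fun k => ha (S k) ltac:(lia)) hsum n).
    lra.
Qed.
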